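(* Let $A$ be a unital C*-algebra that admits a unital $*$-homomorphism $Z_{2,3}\to A$. Then $\xi(A)\leq6$. This applies in particular to all unital $\mathcal{Z}$-stable C*-algebras (unital C*-algebras $A$ with $A\cong A\otimes\mathcal{Z}$, where $\mathcal{Z}$ is the Jiang–Su algebra).
   Context: The dimension drop algebra is $Z_{2,3}=\{f\colon[0,1]\to M_2(\mathbb{C})\otimes M_3(\mathbb{C})\text{ continuous}: f(0)\in M_2(\mathbb{C})\otimes 1,\ f(1)\in 1\otimes M_3(\mathbb{C})\}$. For a unital ring $T$ generated by its commutators, $\xi(T)$ is the minimal $N\in\mathbb{N}$ such that every element of $T$ is a sum of $N$ elements of the form $[b,c][d,e]$ with $b,c,d,e\in T$, where $[x,y]=xy-yx$. *)

From HB Require Import structures.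
From mathcomp Require Import all_boot all_order all_algebra.
From mathcomp Require Import complex mxtens.
From mathcomp Require Import all_classical all_reals topology normedtype.
Set Implicit Arguments. Unset Strict Implicit. Unset Printing Implicit Defensive.
Import Order.TTheory GRing.Theory Num.Theory.
Import numFieldTopology.Exports numFieldNormedType.Exports.
Local Open Scope ring_scope.

Definition is_unital_Cstar_algebra (R : realType) (A : algType R[i])
    (st : A -> A) (nrm : A -> R) : Prop :=
  [/\
      [/\ (forall x y : A, st (x + y) = st x + st y),
          (forall (l : R[i]) (x : A), st (l *: x) = (conjc l) *: st x),
          (forall x y : A, st (x * y) = st y * st x) &
          (forall x : A, st (st x) = x)],
      [/\ (forall x : A, 0 <= nrm x /\ (nrm x = 0 <-> x = 0)),
          (forall x y : A, nrm (x + y) <= nrm x + nrm y),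
          (forall (l : R[i]) (x : A), nrm (l *: x) = Normc.normc l * nrm x) &
          (forall x y : A, nrm (x * y) <= nrm x * nrm y)],
      (forall x : A, nrm (st x * x) = nrm x ^+ 2) &
      (forall u : nat -> A,
         (forall e : R, 0 < e -> exists N : nat, forall m n : nat,
            (N <= m)%N -> (N <= n)%N -> nrm (u m - u n) < e) ->
         exists l : A, forall e : R, 0 < e -> exists N : nat, forall n : nat,
            (N <= n)%N -> nrm (u n - l) < e)].

(* M_2(C) (x) M_3(C) is 'M[R[i]]_(2*3) via the Kronecker product *t.       *)
(* An element f : [0,1] -> M_2 (x) M_3 is represented by its extension to   *)
(* R that is constant on (-oo,0] and on [1,+oo); this is a bijection with   *)
(* the continuous functions on [0,1], compatible with all operations.       *)
Definition Mx6 (R : realType) := 'M[R[i]]_(2 * 3).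

Definition mx_continuous (R : realType) (f : R -> Mx6 R) : Prop :=
  forall i j : 'I_(2 * 3),
    continuous (fun t : R => complex.Re (f t i j)) /\
    continuous (fun t : R => complex.Im (f t i j)).

Definition in_Z23 (R : realType) (f : R -> Mx6 R) : Prop :=
  [/\ mx_continuous f,
      (forall t : R, t <= 0 -> f t = f 0),
      (forall t : R, 1 <= t -> f t = f 1),
      (exists a : 'M[R[i]]_2, f 0 = a *t (1%:M : 'M[R[i]]_3)) &
      (exists b : 'M[R[i]]_3, f 1 = (1%:M : 'M[R[i]]_2) *t b)].

Definition Zadd (R : realType) (f g : R -> Mx6 R) : R -> Mx6 R :=
  fun t => f t + g t.
Definition Zmul (R : realType) (f g : R -> Mx6 R) : R -> Mx6 R :=
  fun t => f t *m g t.
Definition Zscale (R : realType) (l : R[i]) (f : R -> Mx6 R) : R -> Mx6 R :=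
  fun t => l *: f t.
Definition Zstar (R : realType) (f : R -> Mx6 R) : R -> Mx6 R :=
  fun t => map_mx (@conjc R) (f t)^T.
Definition Zone (R : realType) : R -> Mx6 R := fun _ => 1%:M.

Definition unital_star_hom_from_Z23 (R : realType) (A : algType R[i])
    (st : A -> A) (phi : (R -> Mx6 R) -> A) : Prop :=
  [/\ (forall f g, in_Z23 f -> in_Z23 g -> phi (Zadd f g) = phi f + phi g),
      (forall f g, in_Z23 f -> in_Z23 g -> phi (Zmul f g) = phi f * phi g),
      (forall l f, in_Z23 f -> phi (Zscale l f) = l *: phi f),
      (forall f, in_Z23 f -> phi (Zstar f) = st (phi f)) &
      phi (@Zone R) = 1].

Definition commr (T : pzRingType) (x y : T) : T := x * y - y * x.

Definition sum_of_comm_prods (T : pzRingType) (N : nat) (a : T) : Prop :=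
  exists b c d e : 'I_N -> T,
    a = \sum_(k < N) commr (b k) (c k) * commr (d k) (e k).

(* xi(T) <= N : every element of T is a sum of N products of two commutators.
   (This forces T to be generated by its commutators, so xi(T) is defined,
   and the minimal such N is then <= N.) *)
Definition xi_le (T : pzRingType) (N : nat) : Prop :=
  forall a : T, sum_of_comm_prods N a.

(** If a unital ring contains [e_1 + e_2 = 1], [f_11 + f_12 = 1] and
    [f_21 + f_22 + f_23 = 1] such that for each pair [(i, j)] there are [g, h, u]
    with [f_ij u = 0] and [[g, h] u e_i = e_i], then [a = sum_(i,j) e_i a f_ij] and
    [[u, e_i a f_ij] = u e_i a f_ij], hence [e_i a f_ij = [g, h] [u, e_i a f_ij]]:
    every element is a sum of five products of two commutators.  These relations
    are carried along the unital homomorphism, so it suffices to find such elements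
    in Z_{2,3}.

    The interval is cut into 23 slots; each
    element is an integer matrix in M_2 (x) 1 plus integer matrices weighted by
    ramps rising from 0 to 1 on a given slot, conjugated by a product of shears
    [1 + ramp(t) N] with [N^2 = 0] that moves its value at [t = 1] into
    1 (x) M_3.  Conjugation preserves the relations, and on each slot every path is
    affine in a single real parameter, so each relation becomes an identity between
    polynomial matrices with integer coefficients, checked by computation. *)

From HB Require Import structures.
From mathcomp Require Import all_boot all_order all_algebra.
From mathcomp Require Import complex mxtens.
From mathcomp Require Import all_classical all_reals topology normedtype.
Set Implicit Arguments. Unset Strict Implicit. Unset Printing Implicit Defensive.
Import Order.TTheory GRing.Theory Num.Theory.
Import numFieldTopology.Exports numFieldNormedType.Exports.
Local Open Scope ring_scope.

(** * Products of commutators *)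
Section CommutatorProducts.
Variable T : pzRingType.

Definition commr_corner (e f : T) : Prop :=
  exists g h u : T, f * u = 0 /\ commr g h * (u * e) = e.

Lemma sum_of_comm_prods0 n : sum_of_comm_prods n (0 : T).
Proof.
exists (fun=> 0), (fun=> 0), (fun=> 0), (fun=> 0).
by rewrite big1 // => k _; rewrite /commr !mul0r subrr mul0r.
Qed.

Lemma sum_of_comm_prodsD m n (a b : T) :
  sum_of_comm_prods m a -> sum_of_comm_prods n b ->
  sum_of_comm_prods (m + n) (a + b).
Proof.
move=> [b1 [c1 [d1 [e1 ->]]]] [b2 [c2 [d2 [e2 ->]]]].
pose glue (x : 'I_m -> T) (y : 'I_n -> T) k :=
  match fintype.split k with inl i => x i | inr j => y j end.
exists (glue b1 b2), (glue c1 c2), (glue d1 d2), (glue e1 e2).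
rewrite big_split_ord; congr (_ + _); apply: eq_bigr => i _.
  by rewrite /glue (unsplitK (inl _ i)).
by rewrite /glue (unsplitK (inr _ i)).
Qed.

Lemma sum_of_comm_prods_big (I : eqType) (s : seq I) (n : I -> nat) (F : I -> T) :
  {in s, forall i, sum_of_comm_prods (n i) (F i)} ->
  sum_of_comm_prods (\sum_(i <- s) n i) (\sum_(i <- s) F i).
Proof.
elim: s => [|i s IH] sF; first by rewrite !big_nil; apply: sum_of_comm_prods0.
rewrite !big_cons; apply: sum_of_comm_prodsD; first exact/sF/mem_head.
by apply: IH => j sj; apply/sF; rewrite inE sj orbT.
Qed.

Lemma xi_le_leq m n : (m <= n)%N -> xi_le T m -> xi_le T n.
Proof.
move=> le_mn xi_m a; rewrite -(subnK le_mn) -[a]add0r.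
exact: sum_of_comm_prodsD (sum_of_comm_prods0 _) (xi_m a).
Qed.

Lemma sum_of_comm_prods_corner (e f a : T) :
  commr_corner e f -> sum_of_comm_prods 1 (e * a * f).
Proof.
move=> [g [h [u [fu0 ghue]]]].
exists (fun=> g), (fun=> h), (fun=> u), (fun=> e * a * f); rewrite big_ord1.
have -> : commr u (e * a * f) = u * e * a * f.
  by rewrite /commr -(mulrA (e * a)) fu0 mulr0 subr0 !mulrA.
by rewrite !mulrA -(mulrA _ u e) ghue.
Qed.

Lemma xi_le_of_corners (P : seq (T * seq T)) :
  \sum_(p <- P) p.1 = 1 ->
  {in P, forall p, \sum_(f <- p.2) f = 1 /\ {in p.2, forall f, commr_corner p.1 f}} ->
  xi_le T (\sum_(p <- P) size p.2).
Proof.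
move=> sumP cornerP a.
have -> : a = \sum_(p <- P) \sum_(f <- p.2) p.1 * a * f.
  rewrite -[a in LHS]mul1r -sumP mulr_suml; apply: eq_big_seq => p /cornerP[sum_f _].
  by rewrite -mulr_sumr sum_f mulr1.
apply: sum_of_comm_prods_big => p /cornerP[_ corner_f]; rewrite -sum1_size.
by apply: sum_of_comm_prods_big => f /corner_f; apply: sum_of_comm_prods_corner.
Qed.

End CommutatorProducts.

Section Sandwich.
Variables (T : pzRingType) (U V : T).

Definition sandwich (x : T) : T := U * x * V.

Lemma sandwich_sum (I : Type) (s : seq I) (F : I -> T) :
  \sum_(i <- s) sandwich (F i) = sandwich (\sum_(i <- s) F i).
Proof. by rewrite /sandwich mulr_sumr mulr_suml. Qed.

Lemma sandwich0 : sandwich 0 = 0.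
Proof. by rewrite /sandwich mulr0 mul0r. Qed.

Hypothesis VU : V * U = 1.

Lemma sandwichM x y : sandwich x * sandwich y = sandwich (x * y).
Proof. by rewrite /sandwich !mulrA -(mulrA _ V U) VU mulr1. Qed.

Lemma sandwich_commr x y : commr (sandwich x) (sandwich y) = sandwich (commr x y).
Proof. by rewrite /commr !sandwichM /sandwich mulrBr mulrBl. Qed.

Hypothesis UV : U * V = 1.

Lemma sandwich1 : sandwich 1 = 1.
Proof. by rewrite /sandwich mulr1. Qed.

End Sandwich.

Lemma prod_sqr0_inv (T : pzRingType) (s : seq T) : {in s, forall x, x * x = 0} ->
  (\prod_(x <- rev s) (1 - x)) * (\prod_(x <- s) (1 + x)) = 1 /\
  (\prod_(x <- s) (1 + x)) * (\prod_(x <- rev s) (1 - x)) = 1.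
Proof.
elim: s => [|x s IH] sqr0; first by rewrite !big_nil mulr1.
have [IHl IHr] := IH (fun y sy => sqr0 y (mem_behead (sy : y \in behead (x :: s)))).
have x0 := sqr0 x (mem_head x s).
have inv_l : (1 - x) * (1 + x) = 1 by rewrite mulrDr mulr1 mulrBl mul1r x0 subr0 subrK.
have inv_r : (1 + x) * (1 - x) = 1 by rewrite mulrBr mulr1 mulrDl mul1r x0 addr0 addrK.
rewrite rev_cons big_rcons big_cons; split.
  by rewrite -mulrA (mulrA (1 - x)) inv_l mul1r IHl.
by rewrite -mulrA (mulrA (\prod_(y <- s) (1 + y))) IHr mul1r inv_r.
Qed.

(** * Continuous paths of matrices and the algebra Z_{2,3} *)
Section ContinuousPaths.
Variable R : realType.
Local Notation C := R[i].
Local Open Scope complex_scope.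
Local Notation Re := complex.Re.
Local Notation Im := complex.Im.

Lemma continuousRD (f g : R -> R) :
  continuous f -> continuous g -> continuous (fun x => f x + g x).
Proof. by move=> cf cg x; exact: continuousD (cf x) (cg x). Qed.

Lemma continuousRB (f g : R -> R) :
  continuous f -> continuous g -> continuous (fun x => f x - g x).
Proof. by move=> cf cg x; exact: continuousB (cf x) (cg x). Qed.

Lemma continuousRM (f g : R -> R) :
  continuous f -> continuous g -> continuous (fun x => f x * g x).
Proof. by move=> cf cg x; exact: continuousM (cf x) (cg x). Qed.

Lemma ReD (x y : C) : Re (x + y) = Re x + Re y. Proof. by case: x; case: y. Qed.
Lemma ImD (x y : C) : Im (x + y) = Im x + Im y. Proof. by case: x; case: y. Qed.
Lemma ReB (x y : C) : Re (x - y) = Re x - Re y. Proof. by case: x; case: y. Qed.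
Lemma ImB (x y : C) : Im (x - y) = Im x - Im y. Proof. by case: x; case: y. Qed.
Lemma ReM (x y : C) : Re (x * y) = Re x * Re y - Im x * Im y.
Proof. by case: x; case: y. Qed.
Lemma ImM (x y : C) : Im (x * y) = Re x * Im y + Im x * Re y.
Proof. by case: x; case: y. Qed.

Definition Ccontinuous (h : R -> C) : Prop :=
  continuous (fun t => Re (h t)) /\ continuous (fun t => Im (h t)).

Lemma Ccontinuous_cst (z : C) : Ccontinuous (fun=> z).
Proof. by split=> t; apply: cst_continuous. Qed.

Lemma Ccontinuous_real (r : R -> R) : continuous r -> Ccontinuous (fun t => (r t)%:C).
Proof. by move=> r_cont; split=> // t; apply: cst_continuous. Qed.

Lemma CcontinuousD (h1 h2 : R -> C) :
  Ccontinuous h1 -> Ccontinuous h2 -> Ccontinuous (fun t => h1 t + h2 t).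
Proof.
move=> [re1 im1] [re2 im2].
by split; under eq_fun do rewrite ?ReD ?ImD; apply: continuousRD.
Qed.

Lemma CcontinuousB (h1 h2 : R -> C) :
  Ccontinuous h1 -> Ccontinuous h2 -> Ccontinuous (fun t => h1 t - h2 t).
Proof.
move=> [re1 im1] [re2 im2].
by split; under eq_fun do rewrite ?ReB ?ImB; apply: continuousRB.
Qed.

Lemma CcontinuousM (h1 h2 : R -> C) :
  Ccontinuous h1 -> Ccontinuous h2 -> Ccontinuous (fun t => h1 t * h2 t).
Proof.
move=> [re1 im1] [re2 im2]; split.
  by under eq_fun do rewrite ReM; apply: continuousRB; apply: continuousRM.
by under eq_fun do rewrite ImM; apply: continuousRD; apply: continuousRM.
Qed.

Lemma Ccontinuous_sum (I : Type) (s : seq I) (F : I -> R -> C) :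
  (forall i, Ccontinuous (F i)) -> Ccontinuous (fun t => \sum_(i <- s) F i t).
Proof.
move=> F_cont; elim: s => [|i s IH].
  by under eq_fun do rewrite big_nil; apply: Ccontinuous_cst.
by under eq_fun do rewrite big_cons; apply: CcontinuousD.
Qed.

Lemma mx_continuous_cst (M : Mx6 R) : mx_continuous (fun=> M).
Proof. by move=> i j; apply: Ccontinuous_cst. Qed.

Lemma mx_continuousD (f g : R -> Mx6 R) :
  mx_continuous f -> mx_continuous g -> mx_continuous (fun t => f t + g t).
Proof.
move=> cf cg i j; change (Ccontinuous (fun t => (f t + g t) i j)).
by under eq_fun do rewrite mxE; apply: CcontinuousD; [apply: cf | apply: cg].
Qed.

Lemma mx_continuousB (f g : R -> Mx6 R) :
  mx_continuous f -> mx_continuous g -> mx_continuous (fun t => f t - g t).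
Proof.
move=> cf cg i j; change (Ccontinuous (fun t => (f t - g t) i j)).
by under eq_fun do rewrite !mxE; apply: CcontinuousB; [apply: cf | apply: cg].
Qed.

Lemma mx_continuousM (f g : R -> Mx6 R) :
  mx_continuous f -> mx_continuous g -> mx_continuous (fun t => f t *m g t).
Proof.
move=> cf cg i j; change (Ccontinuous (fun t => (f t *m g t) i j)).
under eq_fun do rewrite mxE; apply: Ccontinuous_sum => k.
by apply: CcontinuousM; [apply: cf | apply: cg].
Qed.

Lemma mx_continuousZ (r : R -> R) (f : R -> Mx6 R) : continuous r ->
  mx_continuous f -> mx_continuous (fun t => (r t)%:C *: f t).
Proof.
move=> cr cf i j; change (Ccontinuous (fun t => ((r t)%:C *: f t) i j)).
by under eq_fun do rewrite mxE; apply: CcontinuousM; [apply: Ccontinuous_real | apply: cf].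
Qed.

Lemma mx_continuous_sum (I : Type) (s : seq I) (F : I -> R -> Mx6 R) :
  (forall i, mx_continuous (F i)) -> mx_continuous (fun t => \sum_(i <- s) F i t).
Proof.
move=> cF i j; change (Ccontinuous (fun t => (\sum_(k <- s) F k t) i j)).
by under eq_fun do rewrite summxE; apply: Ccontinuous_sum => k; apply: cF.
Qed.

Lemma mx_continuous_prod (I : Type) (s : seq I) (F : I -> R -> Mx6 R) :
  (forall i, mx_continuous (F i)) -> mx_continuous (fun t => \prod_(i <- s) F i t).
Proof.
move=> cF; elim: s => [|i s IH].
  by under eq_fun do rewrite big_nil; apply: mx_continuous_cst.
by under eq_fun do rewrite big_cons; apply: mx_continuousM.
Qed.

End ContinuousPaths.

Lemma tensmxDl (S : pzRingType) m n p q (A B : 'M[S]_(m, n)) (D : 'M[S]_(p, q)) :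
  (A + B) *t D = A *t D + B *t D.
Proof. by apply/matrixP => i j; rewrite !mxE mulrDl. Qed.

Lemma tensmxDr (S : pzRingType) m n p q (A : 'M[S]_(m, n)) (B D : 'M[S]_(p, q)) :
  A *t (B + D) = A *t B + A *t D.
Proof. by apply/matrixP => i j; rewrite !mxE mulrDr. Qed.

Section Z23Closure.
Variable R : realType.
Implicit Types f g : R -> Mx6 R.

Lemma in_Z23_zero : in_Z23 (fun=> 0 : Mx6 R).
Proof.
split=> //; first exact: mx_continuous_cst.
  by exists 0; rewrite tens0mx.
by exists 0; rewrite tensmx0.
Qed.

Lemma in_Z23_add f g : in_Z23 f -> in_Z23 g -> in_Z23 (Zadd f g).
Proof.
case=> cf f0 f1 [a fa] [b fb]; case=> cg g0 g1 [a' ga] [b' gb]; split.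
- exact: mx_continuousD.
- by move=> t t_le0; rewrite /Zadd f0 ?g0.
- by move=> t t_ge1; rewrite /Zadd f1 ?g1.
- by exists (a + a'); rewrite /Zadd fa ga tensmxDl.
- by exists (b + b'); rewrite /Zadd fb gb tensmxDr.
Qed.

Lemma in_Z23_mul f g : in_Z23 f -> in_Z23 g -> in_Z23 (Zmul f g).
Proof.
case=> cf f0 f1 [a fa] [b fb]; case=> cg g0 g1 [a' ga] [b' gb]; split.
- exact: mx_continuousM.
- by move=> t t_le0; rewrite /Zmul f0 ?g0.
- by move=> t t_ge1; rewrite /Zmul f1 ?g1.
- by exists (a *m a'); rewrite /Zmul fa ga tensmx_mul mulmx1.
- by exists (b *m b'); rewrite /Zmul fb gb tensmx_mul mulmx1.
Qed.

Lemma in_Z23_sum (I : eqType) (s : seq I) (X : I -> R -> Mx6 R) :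
  {in s, forall i, in_Z23 (X i)} -> in_Z23 (fun t => \sum_(i <- s) X i t).
Proof.
elim: s => [|i s IH] Z23X; first by under eq_fun do rewrite big_nil; apply: in_Z23_zero.
under eq_fun do rewrite big_cons; apply: in_Z23_add; first exact/Z23X/mem_head.
by apply: IH => j sj; apply/Z23X/mem_behead.
Qed.

End Z23Closure.

Arguments in_Z23_zero {R}.

Section Z23Hom.
Variables (R : realType) (A : pzRingType) (phi : (R -> Mx6 R) -> A).
Hypothesis phiD : forall f g, in_Z23 f -> in_Z23 g -> phi (Zadd f g) = phi f + phi g.
Hypothesis phiM : forall f g, in_Z23 f -> in_Z23 g -> phi (Zmul f g) = phi f * phi g.
Hypothesis phi1 : phi (@Zone R) = 1.

Lemma phi0 : phi (fun=> 0) = 0.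
Proof.
have := phiD in_Z23_zero in_Z23_zero.
rewrite (_ : Zadd _ _ = fun=> 0); last by apply: funext => t; rewrite /Zadd addr0.
by move=> /esym/eqP; rewrite -subr_eq0 addrK => /eqP.
Qed.

Lemma phi_partition (I : eqType) (s : seq I) (X : I -> R -> Mx6 R) :
  {in s, forall i, in_Z23 (X i)} -> (forall t, \sum_(i <- s) X i t = 1) ->
  \sum_(i <- s) phi (X i) = 1.
Proof.
move=> Z23X sumX; rewrite -phi1 (_ : @Zone R = fun t => \sum_(i <- s) X i t);
  last by apply: funext => t; rewrite sumX.
elim: s Z23X {sumX} => [|i s IH] Z23X.
  by under [in RHS]eq_fun do rewrite big_nil; rewrite big_nil phi0.
have Z23s : {in s, forall j, in_Z23 (X j)} by move=> j sj; apply/Z23X/mem_behead.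
under [in RHS]eq_fun do rewrite big_cons.
rewrite big_cons (IH Z23s) -phiD //; first exact/Z23X/mem_head.
exact: in_Z23_sum.
Qed.

Lemma commr_corner_phi (E F G H U : R -> Mx6 R) :
  in_Z23 E -> in_Z23 F -> in_Z23 G -> in_Z23 H -> in_Z23 U ->
  (forall t, F t * U t = 0) ->
  (forall t, commr (G t) (H t) * (U t * E t) = E t) ->
  commr_corner (phi E) (phi F).
Proof.
move=> ZE ZF ZG ZH ZU FU0 GHUE; exists (phi G), (phi H), (phi U); split.
  by rewrite -phiM // -phi0; congr phi; apply: funext => t; apply: FU0.
have ZUE := in_Z23_mul ZU ZE.
have ZHUE := in_Z23_mul ZH ZUE; have ZGUE := in_Z23_mul ZG ZUE.
have : phi (Zmul G (Zmul H (Zmul U E))) = phi (Zadd (Zmul H (Zmul G (Zmul U E))) E).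
  congr phi; apply: funext => t; apply/eqP; rewrite /Zadd addrC -subr_eq; apply/eqP.
  by rewrite -[RHS](GHUE t) /commr mulrBl -!mulrA.
rewrite (phiD (in_Z23_mul ZH ZGUE) ZE) (phiM ZG ZHUE) (phiM ZH ZGUE).
rewrite (phiM ZH ZUE) (phiM ZG ZUE) (phiM ZU ZE) => GHUE_phi.
by rewrite /commr mulrBl -!mulrA GHUE_phi addrAC subrr add0r.
Qed.

End Z23Hom.

(** * Matrices of integer polynomials *)
(* Plain lists rather than [{poly int}] and ['M_n], whose operations are locked
   and do not reduce under [vm_compute]. *)
Definition ipoly := seq int.

Fixpoint ipoly_add (p q : ipoly) : ipoly :=
  match p, q with
  | [::], _ => q
  | _, [::] => p
  | a :: p', b :: q' => (a + b) :: ipoly_add p' q'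
  end.

Fixpoint ipoly_mul (p q : ipoly) : ipoly :=
  if p is a :: p' then ipoly_add [seq a * b | b <- q] (0 :: ipoly_mul p' q)
  else [::].

Definition ipoly_opp (p : ipoly) : ipoly := [seq - a | a <- p].

Section IpolyEval.
Variables (S : comPzRingType) (x : S).

Definition ipoly_eval (p : ipoly) : S := foldr (fun c v => c%:~R + x * v) 0 p.

Lemma ipoly_evalD p q : ipoly_eval (ipoly_add p q) = ipoly_eval p + ipoly_eval q.
Proof.
elim: p q => [|a p IH] [|b q] /=; rewrite ?add0r ?addr0 //.
by rewrite IH intrD mulrDr addrACA.
Qed.

Lemma ipoly_evalM p q : ipoly_eval (ipoly_mul p q) = ipoly_eval p * ipoly_eval q.
Proof.
have evalZ a : ipoly_eval [seq a * b | b <- q] = a%:~R * ipoly_eval q.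
  by elim: q => [|b q IH] /=; rewrite ?mulr0 // IH intrM mulrDr mulrCA.
elim: p => [|a p IH] /=; first by rewrite mul0r.
by rewrite ipoly_evalD evalZ /= IH mulr0z add0r mulrDl mulrA.
Qed.

Lemma ipoly_evalN p : ipoly_eval (ipoly_opp p) = - ipoly_eval p.
Proof.
by elim: p => [|a p IH] /=; rewrite ?oppr0 // IH intrN mulrN opprD.
Qed.

Lemma ipoly_eval_eq0 p : all (eq_op^~ 0) p -> ipoly_eval p = 0.
Proof. by elim: p => [|a p IH] //= /andP[/eqP -> /IH ->]; rewrite mulr0 addr0. Qed.

End IpolyEval.

Lemma ipoly_eval_at0 (S : comPzRingType) (p : ipoly) :
  ipoly_eval (0 : S) p = (head 0 p)%:~R.
Proof. by case: p => [|a p] /=; rewrite ?mul0r ?addr0. Qed.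

Definition itab := seq (seq ipoly).

Definition itab_entry (T : itab) (i j : nat) : ipoly := nth [::] (nth [::] T i) j.

Definition sparse := seq (nat * nat * int).

Definition sparse_entry (A : sparse) (i j : nat) : int :=
  foldr (fun p v => if (p.1.1 == i) && (p.1.2 == j) then p.2 + v else v) 0 A.

Section ItabOps.
Variable n : nat.

Definition itab_mk (f : nat -> nat -> ipoly) : itab := mkseq (fun i => mkseq (f i) n) n.
Definition itab_add (T U : itab) : itab :=
  itab_mk (fun i j => ipoly_add (itab_entry T i j) (itab_entry U i j)).
Definition itab_opp (T : itab) : itab := itab_mk (fun i j => ipoly_opp (itab_entry T i j)).
Definition itab_sub (T U : itab) : itab := itab_add T (itab_opp U).
Definition itab_mul (T U : itab) : itab :=
  itab_mk (fun i j => foldr ipoly_add [::]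
    (mkseq (fun k => ipoly_mul (itab_entry T i k) (itab_entry U k j)) n)).
Definition itab_id : itab := itab_mk (fun i j => [:: (i == j)%:Z]).
Definition itab_zero : itab := itab_mk (fun _ _ => [::]).
Definition itab_sum (s : seq itab) : itab := foldr itab_add itab_zero s.
Definition itab_prod (s : seq itab) : itab := foldr itab_mul itab_id s.
Definition itab_commr (T U : itab) : itab := itab_sub (itab_mul T U) (itab_mul U T).
Definition itab_affine (A B : sparse) : itab :=
  itab_mk (fun i j => [:: sparse_entry A i j; sparse_entry B i j]).
Definition itab_eqb (T U : itab) : bool :=
  all (fun i => all (fun j =>
    all (eq_op^~ 0) (ipoly_add (itab_entry T i j) (ipoly_opp (itab_entry U i j))))
  (iota 0 n)) (iota 0 n).

End ItabOps.

Section ItabEval.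
Variables (S : comPzRingType) (n : nat).

Definition itab_eval (x : S) (T : itab) : 'M[S]_n :=
  \matrix_(i, j) ipoly_eval x (itab_entry T i j).

Definition sparse_mx (A : sparse) : 'M[S]_n := \matrix_(i, j) (sparse_entry A i j)%:~R.

Lemma itab_entry_mk f (i j : 'I_n) : itab_entry (itab_mk n f) i j = f i j.
Proof. by rewrite /itab_entry /itab_mk !nth_mkseq. Qed.

Lemma itab_evalD x T U : itab_eval x (itab_add n T U) = itab_eval x T + itab_eval x U.
Proof. by apply/matrixP=> i j; rewrite !mxE itab_entry_mk ipoly_evalD. Qed.

Lemma itab_evalN x T : itab_eval x (itab_opp n T) = - itab_eval x T.
Proof. by apply/matrixP=> i j; rewrite !mxE itab_entry_mk ipoly_evalN. Qed.

Lemma itab_evalB x T U : itab_eval x (itab_sub n T U) = itab_eval x T - itab_eval x U.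
Proof. by rewrite itab_evalD itab_evalN. Qed.

Lemma itab_evalM x T U : itab_eval x (itab_mul n T U) = itab_eval x T *m itab_eval x U.
Proof.
apply/matrixP=> i j; rewrite !mxE itab_entry_mk.
have evalF s : ipoly_eval x (foldr ipoly_add [::] s) = \sum_(p <- s) ipoly_eval x p.
  by elim: s => [|p s IH]; rewrite ?big_nil // big_cons /= ipoly_evalD IH.
rewrite evalF /mkseq big_map.
have -> : iota 0 n = index_iota 0 n by rewrite /index_iota subn0.
rewrite big_mkord.
by apply: eq_bigr => k _; rewrite ipoly_evalM !mxE.
Qed.

Lemma itab_eval_id x : itab_eval x (itab_id n) = 1%:M.
Proof. by apply/matrixP=> i j; rewrite !mxE itab_entry_mk /= mulr0 addr0. Qed.

Lemma itab_eval_zero x : itab_eval x (itab_zero n) = 0.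
Proof. by apply/matrixP=> i j; rewrite !mxE itab_entry_mk. Qed.

Lemma itab_eval_sum x s : itab_eval x (itab_sum n s) = \sum_(T <- s) itab_eval x T.
Proof.
by elim: s => [|T s IH]; rewrite ?big_nil ?big_cons /= ?itab_eval_zero // itab_evalD IH.
Qed.

Lemma itab_eval_affine x A B :
  itab_eval x (itab_affine n A B) = sparse_mx A + x *: sparse_mx B.
Proof. by apply/matrixP=> i j; rewrite !mxE itab_entry_mk /= mulr0 addr0. Qed.

Lemma itab_eval_eqb x T U : itab_eqb n T U -> itab_eval x T = itab_eval x U.
Proof.
have mem_iota_ord (i : 'I_n) : val i \in iota 0 n by rewrite mem_iota add0n ltn_ord.
move=> /allP TU; apply/matrixP=> i j; apply/eqP; rewrite !mxE -subr_eq0.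
have /allP/(_ _ (mem_iota_ord j)) := TU _ (mem_iota_ord i).
by move=> /(ipoly_eval_eq0 x); rewrite ipoly_evalD ipoly_evalN => ->.
Qed.

Lemma sparse_mx_cat A B : sparse_mx (A ++ B) = sparse_mx A + sparse_mx B.
Proof.
apply/matrixP=> i j; rewrite !mxE -intrD; congr _%:~R.
by elim: A => [|p A IH] /=; rewrite ?add0r // IH; case: ifP => _; rewrite ?addrA.
Qed.

Lemma sparse_mx_nil : sparse_mx [::] = 0.
Proof. by apply/matrixP=> i j; rewrite !mxE. Qed.

End ItabEval.

Arguments itab_eval {S n}.
Arguments sparse_mx {S n}.

Lemma itab_eval_prod (S : comPzRingType) (n : nat) (x : S) (s : seq itab) :
  itab_eval (n := n.+1) x (itab_prod n.+1 s) = \prod_(T <- s) itab_eval x T.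
Proof.
by elim: s => [|T s IH]; rewrite ?big_nil ?big_cons /= ?itab_eval_id // itab_evalM IH.
Qed.

Section TensorForms.
Variables (S : comPzRingType) (p q : nat).

Definition left_tensor_form (T : itab) : bool :=
  all (fun i => all (fun j => head 0 (itab_entry T i j) ==
    if (i %% q == j %% q)%N then head 0 (itab_entry T (i %/ q * q) (j %/ q * q)) else 0)
  (iota 0 (p * q))) (iota 0 (p * q)).

Definition right_tensor_form (T : itab) : bool :=
  all (fun i => all (fun j => head 0 (itab_entry T i j) ==
    if (i %/ q == j %/ q)%N then head 0 (itab_entry T (i %% q) (j %% q)) else 0)
  (iota 0 (p * q))) (iota 0 (p * q)).

Lemma mxtens_index_val (a : 'I_p) (b : 'I_q) :
  [/\ (mxtens_index (a, b) %% q = b)%N, (mxtens_index (a, b) %/ q = a)%N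
    & (mxtens_index (a, b) : nat) \in iota 0 (p * q)].
Proof.
have q_gt0 : (0 < q)%N by apply: leq_ltn_trans (ltn_ord b).
rewrite /= modnMDl modn_small // divnMDl // divn_small // addn0 mem_iota add0n.
by split=> //=; exact: (mxtens_index_proof (a, b)).
Qed.

Lemma left_tensor_formP (T : itab) : left_tensor_form T ->
  exists a : 'M[S]_p, itab_eval 0 T = a *t (1%:M : 'M[S]_q).
Proof.
move=> /allP formT; exists (\matrix_(a, b) (head 0 (itab_entry T (a * q) (b * q)))%:~R).
apply/matrixP => i j; case: (mxtens_indexP i) => a b; case: (mxtens_indexP j) => a' b'.
have [ab_mod ab_div ab_in] := mxtens_index_val a b.
have [ab_mod' ab_div' ab_in'] := mxtens_index_val a' b'.
rewrite tensmxE !mxE ipoly_eval_at0; move/allP/(_ _ ab_in'): (formT _ ab_in) => /eqP ->.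
rewrite ab_mod ab_div ab_mod' ab_div' (inj_eq val_inj).
by case: (b == b'); rewrite ?mulr1 ?mulr0.
Qed.

Lemma right_tensor_formP (T : itab) : right_tensor_form T ->
  exists b : 'M[S]_q, itab_eval 0 T = (1%:M : 'M[S]_p) *t b.
Proof.
move=> /allP formT; exists (\matrix_(a, b) (head 0 (itab_entry T a b))%:~R).
apply/matrixP => i j; case: (mxtens_indexP i) => a b; case: (mxtens_indexP j) => a' b'.
have [ab_mod ab_div ab_in] := mxtens_index_val a b.
have [ab_mod' ab_div' ab_in'] := mxtens_index_val a' b'.
rewrite tensmxE !mxE ipoly_eval_at0; move/allP/(_ _ ab_in'): (formT _ ab_in) => /eqP ->.
rewrite ab_mod ab_div ab_mod' ab_div' (inj_eq val_inj).
by case: (a == a'); rewrite ?mul1r ?mul0r.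
Qed.

End TensorForms.

(** * Piecewise-linear paths *)
Section Ramps.
Variable R : realType.

Definition clamp01 (x : R) : R := Num.max 0 (Num.min 1 x).

Definition ramp (n k : nat) (t : R) : R := clamp01 (n%:R * clamp01 t - k%:R).

Definition on_slot (r : nat -> R) (k : nat) (l : R) : Prop :=
  forall j, r j = if (j < k)%N then 1 else if j == k then l else 0.

Lemma clamp01_le0 x : x <= 0 -> clamp01 x = 0.
Proof. by move=> x_le0; rewrite /clamp01 min_r ?max_l // (le_trans x_le0). Qed.

Lemma clamp01_ge1 x : 1 <= x -> clamp01 x = 1.
Proof. by move=> x_ge1; rewrite /clamp01 min_l // max_r. Qed.

Lemma clamp01_ge0 x : 0 <= clamp01 x.
Proof. by rewrite /clamp01 le_max lexx. Qed.

Lemma clamp01_le1 x : clamp01 x <= 1.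
Proof. by rewrite /clamp01 ge_max ler01 ge_min lexx. Qed.

Lemma continuous_clamp01 : continuous clamp01.
Proof.
move=> x; apply: continuous_max; first exact: cst_continuous.
by apply: continuous_min; [exact: cst_continuous | exact: cvg_id].
Qed.

Lemma continuous_ramp n k : continuous (ramp n k).
Proof.
move=> t; apply: (@continuous_comp _ _ _ (fun t => n%:R * clamp01 t - k%:R) clamp01);
  last exact: continuous_clamp01.
apply: continuousB; last exact: cst_continuous.
by apply: continuousM; [exact: cst_continuous | exact: continuous_clamp01].
Qed.

Lemma ramp_le0 n k t : t <= 0 -> ramp n k t = ramp n k 0.
Proof. by move=> t_le0; rewrite /ramp (clamp01_le0 t_le0) (clamp01_le0 (lexx 0)). Qed.

Lemma ramp_ge1 n k t : 1 <= t -> ramp n k t = ramp n k 1.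
Proof. by move=> t_ge1; rewrite /ramp (clamp01_ge1 t_ge1) (clamp01_ge1 (lexx 1)). Qed.

Lemma nat_bracket (m : nat) (z : R) : 0 <= z -> z <= m.+1%:R ->
  exists k, [/\ (k <= m)%N, k%:R <= z & z <= k.+1%:R].
Proof.
move=> z_ge0; elim: m => [|m IH] z_le; first by exists 0%N.
have [z_le'|z_gt] := leP z m.+1%:R; last by exists m.+1; rewrite ltW.
by have [k [le_km ? ?]] := IH z_le'; exists k; rewrite leqW.
Qed.

Lemma ramp_on_slot n t : (0 < n)%N ->
  exists2 k, (k < n)%N & exists l, on_slot (ramp n ^~ t) k l.
Proof.
move=> n_gt0; set y := n%:R * clamp01 t.
have y_ge0 : 0 <= y by rewrite mulr_ge0 ?clamp01_ge0.
have y_len : y <= n.-1.+1%:R by rewrite prednK // -[leRHS]mulr1 ler_wpM2l ?clamp01_le1.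
have [k [le_kn le_ky le_yk]] := nat_bracket y_ge0 y_len.
exists k; first by rewrite -ltnS prednK in le_kn.
exists (ramp n k t) => j; rewrite /ramp -/y.
case: ltnP => [lt_jk|le_kj].
  by rewrite clamp01_ge1 // lerBrDr addrC natr1 (le_trans _ le_ky) ?ler_nat.
case: eqP => [->|/eqP ne_jk] //; rewrite clamp01_le0 // subr_le0 (le_trans le_yk) //.
by rewrite ler_nat ltn_neqAle eq_sym ne_jk.
Qed.

Lemma ramp_on_slot0 n : on_slot (ramp n ^~ 0) 0 0.
Proof.
move=> j; rewrite /ramp (clamp01_le0 (lexx 0)) mulr0 sub0r clamp01_le0 ?if_same //.
by rewrite oppr_le0.
Qed.

Lemma ramp_on_slot1 n : on_slot (ramp n ^~ 1) n 0.
Proof.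
move=> j; rewrite /ramp (clamp01_ge1 (lexx 1)) mulr1.
case: ltnP => [lt_jn|le_nj]; first by rewrite clamp01_ge1 // lerBrDr addrC natr1 ler_nat.
by rewrite clamp01_le0 ?if_same // subr_le0 ler_nat.
Qed.

End Ramps.

Definition ramp_data := (sparse * seq (nat * sparse))%type.

Definition on_all_slots (n : nat) (P : pred nat) : bool := all P (iota 0 n).

Local Notation dim6 := (2 * 3)%N.

Section RampPaths.
Variable R : realType.
Local Open Scope complex_scope.

Definition ramp_mx (d : ramp_data) (r : nat -> R) : Mx6 R :=
  sparse_mx d.1 + \sum_(p <- d.2) (r p.1)%:C *: sparse_mx p.2.

Definition slot_tab (d : ramp_data) (k : nat) : itab :=
  itab_affine dim6 (d.1 ++ flatten [seq p.2 | p <- d.2 & (p.1 < k)%N])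
    (flatten [seq p.2 | p <- d.2 & p.1 == k]).

Lemma ramp_mx_on_slot d r k l :
  on_slot r k l -> ramp_mx d r = itab_eval l%:C (slot_tab d k).
Proof.
move=> rkl; rewrite /slot_tab itab_eval_affine sparse_mx_cat -addrA; congr (_ + _).
elim: d.2 => [|p s IH] /=; first by rewrite big_nil sparse_mx_nil scaler0 addr0.
rewrite big_cons IH rkl; case: (ltngtP p.1 k) => _ /=.
- by rewrite sparse_mx_cat scale1r addrA.
- by rewrite scale0r add0r.
- by rewrite sparse_mx_cat scalerDr addrCA.
Qed.

Lemma continuous_ramp_mx d (r : nat -> R -> R) : (forall k, continuous (r k)) ->
  mx_continuous (fun t => ramp_mx d (r^~ t)).
Proof.
move=> r_cont; apply: mx_continuousD; first exact: mx_continuous_cst.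
by apply: mx_continuous_sum => p; apply: mx_continuousZ => //; apply: mx_continuous_cst.
Qed.

Variables (nslots : nat) (shears : seq (nat * sparse)).

Definition shear_mx (p : nat * sparse) (r : nat -> R) : Mx6 R := ramp_mx ([::], [:: p]) r.
Definition shear_fwd (r : nat -> R) : Mx6 R := \prod_(p <- shears) (1 + shear_mx p r).
Definition shear_bwd (r : nat -> R) : Mx6 R := \prod_(p <- rev shears) (1 - shear_mx p r).

Definition ramp_path (d : ramp_data) (t : R) : Mx6 R :=
  let r := ramp nslots ^~ t in sandwich (shear_fwd r) (shear_bwd r) (ramp_mx d r).

Definition path_tab (d : ramp_data) (k : nat) : itab :=
  let shear_tab p := slot_tab ([::], [:: p]) k in
  itab_mul dim6
    (itab_mul dim6
       (itab_prod dim6 [seq itab_add dim6 (itab_id dim6) (shear_tab p) | p <- shears])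
       (slot_tab d k))
    (itab_prod dim6 [seq itab_sub dim6 (itab_id dim6) (shear_tab p) | p <- rev shears]).

Lemma ramp_path_on_slot d t k l : on_slot (ramp nslots ^~ t) k l ->
  ramp_path d t = itab_eval l%:C (path_tab d k).
Proof.
move=> tkl; rewrite /path_tab !itab_evalM !mulmxE !itab_eval_prod !big_map.
rewrite /ramp_path /sandwich (ramp_mx_on_slot _ tkl); congr (_ * _ * _).
  by apply: eq_bigr => p _; rewrite itab_evalD itab_eval_id -(ramp_mx_on_slot _ tkl).
by apply: eq_bigr => p _; rewrite itab_evalB itab_eval_id -(ramp_mx_on_slot _ tkl).
Qed.

Lemma continuous_ramp_path d : mx_continuous (ramp_path d).
Proof.
have ramp_cont k : continuous (ramp nslots k : R -> R) by apply: continuous_ramp.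
rewrite /ramp_path /sandwich /shear_fwd /shear_bwd.
apply: mx_continuousM; first apply: mx_continuousM.
- apply: mx_continuous_prod => p; apply: mx_continuousD; first exact: mx_continuous_cst.
  exact: continuous_ramp_mx.
- exact: continuous_ramp_mx.
apply: mx_continuous_prod => p; apply: mx_continuousB; first exact: mx_continuous_cst.
exact: continuous_ramp_mx.
Qed.

Lemma ramp_path_le0 d t : t <= 0 -> ramp_path d t = ramp_path d 0.
Proof.
move=> t_le0; rewrite /ramp_path (_ : ramp nslots ^~ t = ramp nslots ^~ 0) //.
by apply: funext => k; apply: ramp_le0.
Qed.

Lemma ramp_path_ge1 d t : 1 <= t -> ramp_path d t = ramp_path d 1.
Proof.
move=> t_ge1; rewrite /ramp_path (_ : ramp nslots ^~ t = ramp nslots ^~ 1) //.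
by apply: funext => k; apply: ramp_ge1.
Qed.

Definition endpoints_ok (d : ramp_data) : bool :=
  left_tensor_form 2 3 (path_tab d 0) && right_tensor_form 2 3 (path_tab d nslots).

Lemma in_Z23_ramp_path d : endpoints_ok d -> in_Z23 (ramp_path d).
Proof.
move=> /andP[/(left_tensor_formP R[i]) [a a_ok] /(right_tensor_formP R[i]) [b b_ok]].
split.
- exact: continuous_ramp_path.
- exact: ramp_path_le0.
- exact: ramp_path_ge1.
- by exists a; rewrite (ramp_path_on_slot _ (ramp_on_slot0 _ _)).
- by exists b; rewrite (ramp_path_on_slot _ (ramp_on_slot1 _ _)).
Qed.

Definition partition_ok (s : seq ramp_data) : bool :=
  on_all_slots nslots (fun k =>
    itab_eqb dim6 (itab_sum dim6 [seq slot_tab d k | d <- s]) (itab_id dim6)).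

Definition mul0_ok (f u : ramp_data) : bool :=
  on_all_slots nslots (fun k =>
    itab_eqb dim6 (itab_mul dim6 (slot_tab f k) (slot_tab u k)) (itab_zero dim6)).

Definition corner_ok (e g h u : ramp_data) : bool :=
  on_all_slots nslots (fun k =>
    itab_eqb dim6
      (itab_mul dim6 (itab_commr dim6 (slot_tab g k) (slot_tab h k))
         (itab_mul dim6 (slot_tab u k) (slot_tab e k)))
      (slot_tab e k)).

Hypothesis nslots_gt0 : (0 < nslots)%N.
Hypothesis shears_sqr0 :
  {in shears, forall p, sparse_mx p.2 * sparse_mx p.2 = 0 :> Mx6 R}.

Lemma shear_bwd_fwd r : shear_bwd r * shear_fwd r = 1 /\ shear_fwd r * shear_bwd r = 1.
Proof.
have sqr0 : {in [seq shear_mx p r | p <- shears], forall x, x * x = 0}.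
  move=> _ /mapP[p sp ->]; rewrite /shear_mx /ramp_mx sparse_mx_nil add0r big_seq1.
  by rewrite -scalerAl -scalerAr shears_sqr0 // !scaler0.
by have := prod_sqr0_inv sqr0; rewrite -map_rev !big_map.
Qed.

Lemma ramp_path_slot t : exists U V : Mx6 R, [/\ V * U = 1, U * V = 1 &
  exists2 k, (k < nslots)%N & exists l,
    forall d, ramp_path d t = sandwich U V (itab_eval l%:C (slot_tab d k))].
Proof.
have [k lt_k [l tkl]] := ramp_on_slot t nslots_gt0.
have [VU UV] := shear_bwd_fwd (ramp nslots ^~ t).
exists (shear_fwd (ramp nslots ^~ t)), (shear_bwd (ramp nslots ^~ t)); split=> //.
by exists k => //; exists l => d; rewrite /ramp_path (ramp_mx_on_slot _ tkl).
Qed.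

Lemma ramp_path_partition s : partition_ok s -> forall t, \sum_(d <- s) ramp_path d t = 1.
Proof.
move=> /allP sum_ok t; have [U [V [VU UV [k lt_k [l path_t]]]]] := ramp_path_slot t.
under eq_bigr do rewrite path_t; rewrite sandwich_sum.
rewrite (_ : \sum_(d <- s) _ = itab_eval l%:C (itab_sum dim6 [seq slot_tab d k | d <- s])).
  by rewrite (itab_eval_eqb _ (sum_ok k _)) ?mem_iota // itab_eval_id sandwich1.
by rewrite itab_eval_sum big_map.
Qed.

Lemma ramp_path_mul0 f u : mul0_ok f u -> forall t, ramp_path f t * ramp_path u t = 0.
Proof.
move=> /allP mul_ok t; have [U [V [VU UV [k lt_k [l path_t]]]]] := ramp_path_slot t.
rewrite !path_t sandwichM // -mulmxE -itab_evalM.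
by rewrite (itab_eval_eqb _ (mul_ok k _)) ?mem_iota // itab_eval_zero sandwich0.
Qed.

Lemma ramp_path_corner e g h u : corner_ok e g h u ->
  forall t, commr (ramp_path g t) (ramp_path h t) * (ramp_path u t * ramp_path e t) =
            ramp_path e t.
Proof.
move=> /allP corner_ok t; have [U [V [VU UV [k lt_k [l path_t]]]]] := ramp_path_slot t.
rewrite !path_t sandwich_commr // !sandwichM //; congr (sandwich U V _).
rewrite /commr -!mulmxE -!itab_evalM -itab_evalB -itab_evalM.
by rewrite (itab_eval_eqb _ (corner_ok k _)) ?mem_iota.
Qed.

End RampPaths.

(** * The certificate *)
Definition frame := (ramp_data * ramp_data * ramp_data * ramp_data)%type.

Definition certificate := seq (ramp_data * seq frame).

Definition sqr0_ok (N : sparse) : bool :=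
  itab_eqb dim6 (itab_mul dim6 (itab_affine dim6 N [::]) (itab_affine dim6 N [::]))
    (itab_zero dim6).

Definition frame_ok nslots shears (e : ramp_data) (fr : frame) : bool :=
  let: (f, g, h, u) := fr in
  [&& all (endpoints_ok nslots shears) [:: f; g; h; u], mul0_ok nslots f u
    & corner_ok nslots e g h u].

Definition certificate_ok nslots shears (c : certificate) : bool :=
  [&& all (fun p => sqr0_ok p.2) shears,
      partition_ok nslots [seq x.1 | x <- c]
    & all (fun x => [&& endpoints_ok nslots shears x.1,
                        partition_ok nslots [seq fr.1.1.1 | fr <- x.2]
                      & all (frame_ok nslots shears x.1) x.2]) c].

Section CertificateSound.
Variables (R : realType) (A : pzRingType) (phi : (R -> Mx6 R) -> A).
Hypothesis phiD : forall f g, in_Z23 f -> in_Z23 g -> phi (Zadd f g) = phi f + phi g.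
Hypothesis phiM : forall f g, in_Z23 f -> in_Z23 g -> phi (Zmul f g) = phi f * phi g.
Hypothesis phi1 : phi (@Zone R) = 1.

Lemma xi_le_of_certificate nslots shears (c : certificate) :
  (0 < nslots)%N -> certificate_ok nslots shears c ->
  xi_le A (sumn [seq size x.2 | x <- c]).
Proof.
move=> nslots_gt0 /and3P[/allP sqr0_shears part_ok /allP groups_ok].
have shears_sqr0 : {in shears, forall p, sparse_mx p.2 * sparse_mx p.2 = 0 :> Mx6 R}.
  move=> p /sqr0_shears /(itab_eval_eqb (0 : R[i])).
  by rewrite itab_evalM itab_eval_affine itab_eval_zero sparse_mx_nil scaler0 addr0.
pose path := ramp_path (R := R) nslots shears.
have Z23_path d : endpoints_ok nslots shears d -> in_Z23 (path d).
  exact: in_Z23_ramp_path.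
pose P := [seq (phi (path x.1), [seq phi (path fr.1.1.1) | fr <- x.2]) | x <- c].
have -> : sumn [seq size x.2 | x <- c] = \sum_(p <- P) size p.2.
  by rewrite sumnE !big_map; apply: eq_bigr => x _; rewrite size_map.
apply: xi_le_of_corners.
  rewrite big_map; apply: (phi_partition phiD phi1 (X := fun x => path x.1)).
  - by move=> x /groups_ok /and3P[ends_ok _ _]; apply: Z23_path.
  - by move=> t; rewrite -(big_map fst xpredT (path^~ t)); apply: ramp_path_partition.
move=> _ /mapP[x xc ->] /=; have /and3P[_ fpart_ok /allP frames_ok] := groups_ok x xc.
split.
  rewrite big_map; apply: (phi_partition phiD phi1 (X := fun fr => path fr.1.1.1)).
  - move=> [[[f g] h] u] /frames_ok /and3P[/and5P[ends_ok _ _ _ _] _ _].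
    exact: Z23_path.
  - move=> t; rewrite -(big_map (fun fr => fr.1.1.1) xpredT (path^~ t)).
    exact: ramp_path_partition.
move=> _ /mapP[[[[f g] h] u] frx ->] /=.
have /and3P[/and5P[Zf Zg Zh Zu _] mul0_ok corner_ok] := frames_ok _ frx.
have Ze : endpoints_ok nslots shears x.1 by case/and3P: (groups_ok x xc).
apply: (commr_corner_phi phiD phiM (Z23_path _ Ze) (Z23_path _ Zf) (Z23_path _ Zg)
          (Z23_path _ Zh) (Z23_path _ Zu)).
  exact: (ramp_path_mul0 nslots_gt0 shears_sqr0 mul0_ok).
exact: (ramp_path_corner nslots_gt0 shears_sqr0 corner_ok).
Qed.

End CertificateSound.

Definition z23_shears : seq (nat * sparse) :=
  let n1 := [:: (1, 3, -1); (4, 5, -2)] in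
  [:: (19, n1); (20, [:: (3, 1, 1); (5, 4, 1)]); (21, n1); (22, [:: (5, 4, 1)])].

Definition z23_certificate : certificate := [::
  (([:: (0, 0, 1); (1, 1, 1); (2, 2, 1)], [:: (11, [:: (2, 2, -1)])]),
   [:: (([:: (3, 3, 1); (4, 4, 1); (5, 5, 1)], [:: (13, [:: (2, 2, 1)])]),
        ([:: (0, 3, -1); (1, 4, -1); (2, 5, -1)], [:: (15, [:: (2, 5, 1)])]),
        ([:: (3, 0, -1); (4, 1, -1); (5, 2, -1)], [:: (14, [:: (5, 2, 1)])]),
        ([:: (0, 0, 1); (1, 1, 1); (2, 2, 1)], [:: (12, [:: (2, 2, -1)])]));
       (([:: (0, 0, 1); (1, 1, 1); (2, 2, 1)], [:: (13, [:: (2, 2, -1)])]),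
        ([:: (0, 0, 1); (1, 1, 1); (2, 2, 1)], [:: (15, [:: (2, 2, -1)])]),
        ([:: (0, 3, -1); (1, 4, -1); (2, 5, -1)], [:: (14, [:: (2, 5, 1)])]),
        ([:: (3, 0, -1); (4, 1, -1); (5, 2, -1)], [:: (16, [:: (5, 2, 1)])]))]);
  (([:: (3, 3, 1); (4, 4, 1); (5, 5, 1)], [:: (11, [:: (2, 2, 1)])]),
   [:: (([:: (0, 0, 1); (1, 1, 1); (2, 2, 1)], [:: (5, [:: (2, 2, -1)])]),
        ([:: (3, 0, -1); (4, 1, -1); (5, 2, -1)], [:: (7, [:: (0, 2, -1); (1, 5, 1); (5, 2, 1)])]),
        ([:: (0, 3, -1); (1, 4, -1); (2, 5, -1)],
          [:: (6, [:: (0, 1, 1); (5, 1, -1)]);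
              (10, [:: (0, 1, -1); (2, 0, 1); (2, 5, 1)])]),
        ([:: (3, 3, 1); (4, 4, 1); (5, 5, 1)], [:: (8, [:: (2, 2, 1)])]));
       (([:: (3, 3, 1); (4, 4, 1); (5, 5, 1)], [:: (5, [:: (5, 5, -1)])]),
        ([:: (3, 3, 1); (4, 4, 1); (5, 5, 1)],
          [:: (7, [:: (0, 0, -1); (1, 1, -1); (1, 2, -1); (2, 2, -1);
                      (3, 3, -1); (4, 4, -1); (4, 5, -1); (5, 5, -1)]);
              (9, [:: (0, 0, 1); (1, 1, 1); (1, 2, 1); (2, 2, 1);
                      (3, 2, 1); (3, 3, 1); (4, 4, 1)])]),
        ([:: (3, 0, -1); (4, 1, -1); (5, 2, -1)],
          [:: (6, [:: (5, 4, 1)]);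
              (10, [:: (2, 3, -1); (5, 2, 1)])]),
        ([:: (0, 3, -1); (1, 4, -1); (2, 5, -1)], [:: (8, [:: (2, 2, 1); (2, 5, 1); (5, 5, 1)])]));
       (([::], [:: (5, [:: (2, 2, 1); (5, 5, 1)])]),
        ([:: (3, 3, 1); (4, 4, 1); (5, 5, 1)],
          [:: (1, [:: (0, 0, -1); (1, 1, -2); (2, 2, -1); (3, 3, -1); (4, 4, -2); (5, 5, -1)]);
              (3, [:: (0, 0, 1); (1, 1, 2); (2, 2, 3); (3, 3, 1); (4, 4, 2); (5, 5, 2)])]),
        ([:: (3, 0, -1); (4, 1, -1); (5, 2, -1)],
          [:: (0, [:: (5, 4, 1)]);
              (4, [:: (2, 3, -1); (5, 2, 1)])]),
        ([:: (0, 3, -1); (1, 4, -1); (2, 5, -1)],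
          [:: (2, [:: (2, 5, 1); (3, 2, -1); (4, 5, 1)])]))])].

Lemma z23_certificate_ok : certificate_ok 23 z23_shears z23_certificate.
Proof. by vm_compute. Qed.

Unset Implicit Arguments. Set Strict Implicit.

Theorem theorem6p4 (R : realType) (A : algType R[i]) (st : A -> A) (nrm : A -> R) :
  is_unital_Cstar_algebra st nrm ->
  (exists phi : (R -> Mx6 R) -> A, unital_star_hom_from_Z23 st phi) ->
  xi_le A 6.
Proof.
move=> _ [phi [phiD phiM _ _ phi1]].
apply: (xi_le_leq (m := 5)) => //.
exact: (xi_le_of_certificate phiD phiM phi1 _ z23_certificate_ok).
Qed.
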